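(* Let $r>0$, let $k\in\{2,\dots,n\}$, and let $\mathbf{c}=(c_1,\dots,c_{k-1},c_k,0,\dots,0)\in\mathbb{R}^n_{\ge0}$ and $\mathbf{c}'=(c_1,\dots,c_{k-1},0,0,\dots,0)$ (i.e. $\mathbf{c}'$ is obtained from $\mathbf{c}$ by replacing its $k$-th component by $0$). Then $$\mathrm{Vol}\big(C(\mathbf{0},1)\cap C(\mathbf{c},r)\big)\le \mathrm{Vol}\big(C(\mathbf{0},1)\cap C(\mathbf{c}',r)\big).$$
   Context: For $\mathbf{c}\in\mathbb{R}^n$, $r\ge 0$, $C(\mathbf{c},r)=\{\mathbf{x}\in\mathbb{R}^n:\|\mathbf{x}-\mathbf{c}\|_1\le r\}$. *)

(* classical reals. Volume in R^n is formalized as Jordan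
   content (limit of inner/outer counts of grid cubes of side 1/(m+1)). *)
From Stdlib Require Import Reals List Arith ClassicalEpsilon.
Import ListNotations.
Open Scope R_scope.

(* Points of R^n are functions nat -> R; only coordinates 0..n-1 matter
   (coordinate i here is the paper's coordinate i+1). *)

Fixpoint l1dist (n : nat) (x y : nat -> R) : R :=
  match n with
  | O => 0
  | S n' => l1dist n' x y + Rabs (x n' - y n')
  end.

Definition Cball (n : nat) (c : nat -> R) (r : R) : (nat -> R) -> Prop :=
  fun x => l1dist n x c <= r.

Fixpoint tuples (n K : nat) : list (list nat) :=
  match n with
  | O => [nil]
  | S n' => flat_map (fun l => map (fun j => j :: l) (seq 0 K)) (tuples n' K)
  end.

Definition gcube (n B m : nat) (l : list nat) : (nat -> R) -> Prop :=
  fun x => forall i, (i < n)%nat ->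
    - INR B + INR (nth i l O) / INR (S m) <= x i <=
    - INR B + INR (S (nth i l O)) / INR (S m).

Definition countP (P : list nat -> Prop) (L : list (list nat)) : nat :=
  length (filter (fun l => if excluded_middle_informative (P l) then true else false) L).

Definition inner_approx (n B : nat) (A : (nat -> R) -> Prop) (m : nat) : R :=
  INR (countP (fun l => forall x, gcube n B m l x -> A x)
               (tuples n (2 * B * S m))) / INR (S m) ^ n.

Definition outer_approx (n B : nat) (A : (nat -> R) -> Prop) (m : nat) : R :=
  INR (countP (fun l => exists x, gcube n B m l x /\ A x)
               (tuples n (2 * B * S m))) / INR (S m) ^ n.

Definition has_volume (n : nat) (A : (nat -> R) -> Prop) (v : R) : Prop :=
  exists B : nat,
    (forall x, A x -> forall i, (i < n)%nat -> - INR B <= x i <= INR B) /\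
    Un_cv (inner_approx n B A) v /\ Un_cv (outer_approx n B A) v.

(* The two sets differ only in the centre's coordinate k, so after swapping that
   coordinate to the front, fix a "column" of grid cubes sharing the other
   coordinates.  On each line of that column the section of
   C(0,1) ∩ C(c,r) is an intersection [-p,p] ∩ [c_k-q, c_k+q] of two intervals,
   and moving c_k to 0 turns it into [-p,p] ∩ [-q,q], the longest possible
   intersection of intervals of these half-lengths.  Counting cubes column by
   column, the inner Jordan count for c is therefore at most the outer Jordan
   count for c'.  Both sets are Jordan measurable because in every column only
   O(n) cubes meet the set without lying inside it, and the volume inequality
   follows in the limit. *)
From Stdlib Require Import Reals List Lia Lra Permutation FinFun
  ClassicalEpsilon FunctionalExtensionality.
Open Scope R_scope.

Definition ind {A} (P : A -> Prop) (a : A) : nat :=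
  if excluded_middle_informative (P a) then 1%nat else 0%nat.

Definition cnt {A} (P : A -> Prop) (L : list A) : nat := list_sum (map (ind P) L).

Lemma countP_cnt (P : list nat -> Prop) L : countP P L = cnt P L.
Proof.
  induction L as [|a L IH]; [reflexivity|].
  unfold countP, cnt in *; simpl; unfold ind at 1.
  destruct excluded_middle_informative; simpl; rewrite IH; reflexivity.
Qed.

Lemma ind_le {A B} (P : A -> Prop) (Q : B -> Prop) a b :
  (P a -> Q b) -> (ind P a <= ind Q b)%nat.
Proof. unfold ind; do 2 destruct excluded_middle_informative; intuition lia. Qed.

Lemma ind_eq {A B} (P : A -> Prop) (Q : B -> Prop) a b :
  (P a <-> Q b) -> ind P a = ind Q b.
Proof. unfold ind; do 2 destruct excluded_middle_informative; tauto. Qed.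

Lemma list_sum_map_le_add {A} (f g : A -> nat) C L :
  (forall a, In a L -> (f a <= g a + C)%nat) ->
  (list_sum (map f L) <= list_sum (map g L) + C * length L)%nat.
Proof.
  induction L as [|a L IH]; simpl; intros H; [lia|].
  specialize (H a (or_introl eq_refl)) as Ha.
  assert (list_sum (map f L) <= list_sum (map g L) + C * length L)%nat by auto.
  lia.
Qed.

Lemma list_sum_map_le {A} (f g : A -> nat) L :
  (forall a, In a L -> (f a <= g a)%nat) ->
  (list_sum (map f L) <= list_sum (map g L))%nat.
Proof.
  intros H. pose proof (list_sum_map_le_add f g 0 L) as HC.
  rewrite Nat.mul_0_l, Nat.add_0_r in HC. apply HC. intros a Ha. rewrite Nat.add_0_r. auto.
Qed.

Lemma list_sum_map_add {A} (f g : A -> nat) L :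
  list_sum (map (fun x => f x + g x)%nat L) = (list_sum (map f L) + list_sum (map g L))%nat.
Proof. induction L; simpl; try rewrite IHL; lia. Qed.

Lemma list_sum_map_scale {A} (f : A -> nat) s L :
  list_sum (map (fun x => s * f x)%nat L) = (s * list_sum (map f L))%nat.
Proof. induction L; simpl; try rewrite IHL; lia. Qed.

Lemma list_sum_map_const {A} (c : nat) (L : list A) :
  list_sum (map (fun _ => c) L) = (c * length L)%nat.
Proof. induction L; simpl; try rewrite IHL; lia. Qed.

Lemma list_sum_flat_map {A B} (F : B -> nat) (f : A -> list B) L :
  list_sum (map F (flat_map f L)) = list_sum (map (fun a => list_sum (map F (f a))) L).
Proof. induction L; simpl; auto. rewrite map_app, list_sum_app, IHL. reflexivity. Qed.

Lemma cnt_le {A} (P Q : A -> Prop) L :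
  (forall a, In a L -> P a -> Q a) -> (cnt P L <= cnt Q L)%nat.
Proof. intros H. apply list_sum_map_le. intros a Ha. apply ind_le. auto. Qed.

Lemma cnt_or {A} (P Q1 Q2 : A -> Prop) L :
  (forall a, In a L -> P a -> Q1 a \/ Q2 a) -> (cnt P L <= cnt Q1 L + cnt Q2 L)%nat.
Proof.
  intros H. unfold cnt. rewrite <- list_sum_map_add. apply list_sum_map_le.
  intros a Ha. specialize (H a Ha). unfold ind.
  repeat destruct excluded_middle_informative; intuition lia.
Qed.

Lemma cnt_split {A} (P Q : A -> Prop) L :
  (cnt P L <= cnt Q L + cnt (fun x => P x /\ ~ Q x) L)%nat.
Proof. apply cnt_or. intros a _ HP. destruct (classic (Q a)); auto. Qed.

Lemma cnt_add_cnt_not {A} (P : A -> Prop) L :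
  (cnt P L + cnt (fun x => ~ P x) L)%nat = length L.
Proof.
  induction L as [|a L IH]; [reflexivity|]. unfold cnt in *; simpl.
  unfold ind at 1 3; repeat destruct excluded_middle_informative; simpl; tauto || lia.
Qed.

Lemma tuples_length n K : length (tuples n K) = (K ^ n)%nat.
Proof.
  induction n as [|n IH]; simpl; auto.
  rewrite length_flat_map, (map_ext _ (fun _ => K)) by (intros; rewrite length_map, length_seq; auto).
  rewrite list_sum_map_const, IH. lia.
Qed.

Lemma In_tuples K m l :
  In l (tuples m K) <-> length l = m /\ (forall i, (i < m)%nat -> (nth i l 0 < K)%nat).
Proof.
  revert l; induction m as [|m IH]; intros l; simpl.
  - split.
    + intros [<-|[]]. split; auto. intros; lia.
    + intros [Hl _]. destruct l; simpl in Hl; [auto | lia].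
  - rewrite in_flat_map. split.
    + intros [l' [Hl' Hin]]. apply in_map_iff in Hin. destruct Hin as [j [<- Hj]].
      apply in_seq in Hj. apply IH in Hl'. destruct Hl' as [Hl1 Hl2]. simpl. split; [lia|].
      intros [|i] Hi; simpl; [lia|]. apply Hl2. lia.
    + intros [Hl H]. destruct l as [|j l']; simpl in Hl; [lia|]. exists l'. split.
      * apply IH. split; [lia|]. intros i Hi. apply (H (S i)). lia.
      * apply in_map_iff. exists j. split; auto. apply in_seq.
        pose proof (H 0%nat ltac:(lia)). simpl in *. lia.
Qed.

Lemma NoDup_tuples K m : NoDup (tuples m K).
Proof.
  induction m as [|m IH]; simpl; [repeat constructor; auto|].
  induction IH as [|x l Hx Hl IHl]; simpl; [constructor|].
  apply NoDup_app; auto.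
  - apply Injective_map_NoDup; [|apply seq_NoDup]. intros a b E. injection E; auto.
  - intros a Ha Hb. apply in_map_iff in Ha. destruct Ha as [j [<- _]].
    apply in_flat_map in Hb. destruct Hb as [y [Hy Hin]].
    apply in_map_iff in Hin. destruct Hin as [j' [E _]]. injection E. intros ->. contradiction.
Qed.

Lemma cnt_tuples_S (P : list nat -> Prop) n K :
  cnt P (tuples (S n) K) =
  list_sum (map (fun l => cnt (fun j => P (j :: l)) (seq 0 K)) (tuples n K)).
Proof.
  unfold cnt; simpl. rewrite list_sum_flat_map. f_equal. apply map_ext. intros l.
  rewrite map_map. reflexivity.
Qed.

Lemma list_sum_seq_coarsen (f : nat -> nat) K s : (0 < s)%nat ->
  list_sum (map (fun j => f (j / s)%nat) (seq 0 (K * s))) = (s * list_sum (map f (seq 0 K)))%nat.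
Proof.
  intros Hs. induction K as [|K IH]; [simpl; lia|].
  rewrite Nat.mul_succ_l, seq_app, map_app, list_sum_app, IH, (seq_S K 0), map_app, list_sum_app.
  simpl. rewrite (map_ext_in (fun j => f (j / s)%nat) (fun _ => f K) (seq (K * s) s)).
  - rewrite list_sum_map_const, length_seq. lia.
  - intros j Hj. apply in_seq in Hj. f_equal. symmetry.
    apply (Nat.div_unique _ _ _ (j - K * s)); lia.
Qed.

Lemma list_sum_tuples_coarsen n K s (F : list nat -> nat) : (0 < s)%nat ->
  list_sum (map (fun l => F (map (fun a => a / s)%nat l)) (tuples n (K * s))) =
  (s ^ n * list_sum (map F (tuples n K)))%nat.
Proof.
  intros Hs. revert F. induction n as [|n IH]; intros F; simpl; [lia|].
  rewrite !list_sum_flat_map.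
  erewrite map_ext.
  2:{ intros l. rewrite map_map. simpl.
      exact (list_sum_seq_coarsen (fun i => F (i :: map (fun a => a / s)%nat l)) K s Hs). }
  rewrite (IH (fun l => s * list_sum (map (fun i => F (i :: l)) (seq 0 K)))%nat).
  rewrite list_sum_map_scale.
  erewrite (map_ext (fun a => list_sum (map F (map _ (seq 0 K))))).
  2:{ intros; rewrite map_map; reflexivity. }
  lia.
Qed.

Lemma l1dist_cons n x y :
  l1dist (S n) x y = Rabs (x 0%nat - y 0%nat) + l1dist n (fun i => x (S i)) (fun i => y (S i)).
Proof.
  induction n as [|n IH]; [simpl; ring|].
  change (l1dist (S (S n)) x y) with (l1dist (S n) x y + Rabs (x (S n) - y (S n))).
  rewrite IH. simpl. ring.
Qed.

Lemma l1dist_ge0 n x y : 0 <= l1dist n x y.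
Proof. induction n; simpl; [lra|]. pose proof (Rabs_pos (x n - y n)). lra. Qed.

Lemma Rabs_coord_le_l1dist n x y i : (i < n)%nat -> Rabs (x i - y i) <= l1dist n x y.
Proof.
  induction n as [|n IH]; intros Hi; [lia|]. simpl.
  pose proof (Rabs_pos (x n - y n)). pose proof (l1dist_ge0 n x y).
  destruct (Nat.eq_dec i n) as [->|Hne]; [lra|]. pose proof (IH ltac:(lia)). lra.
Qed.

Lemma l1dist_triangle n u v w : l1dist n u w <= l1dist n u v + l1dist n v w.
Proof.
  induction n; simpl; [lra|].
  pose proof (Rabs_triang (u n - v n) (v n - w n)).
  replace (u n - v n + (v n - w n)) with (u n - w n) in H by ring. lra.
Qed.

Lemma l1dist_le n u v h :
  (forall i, (i < n)%nat -> Rabs (u i - v i) <= h) -> l1dist n u v <= INR n * h.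
Proof.
  induction n as [|n IH]; intros H; [simpl; lra|].
  change (l1dist (S n) u v) with (l1dist n u v + Rabs (u n - v n)). rewrite S_INR.
  pose proof (IH (fun i Hi => H i ltac:(lia))). pose proof (H n ltac:(lia)). lra.
Qed.

Lemma l1dist_sym n x y : l1dist n x y = l1dist n y x.
Proof. induction n; simpl; [reflexivity|]. rewrite IHn, Rabs_minus_sym. reflexivity. Qed.

Lemma l1dist_fold_right m x y :
  l1dist m x y = fold_right Rplus 0 (map (fun i => Rabs (x i - y i)) (seq 0 m)).
Proof.
  induction m as [|m IH]; [reflexivity|].
  change (l1dist (S m) x y) with (l1dist m x y + Rabs (x m - y m)).
  rewrite IH, seq_S, map_app, fold_right_app. simpl.
  generalize (Rabs (x m - y m)); intros a. clear IH.
  induction (map (fun i => Rabs (x i - y i)) (seq 0 m)); simpl; [ring|]. rewrite <- IHl. ring.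
Qed.

Lemma Rabs_le_iff x y : Rabs x <= y <-> - y <= x <= y.
Proof. unfold Rabs; destruct Rcase_abs; split; intros; lra. Qed.

Lemma div_INR_bounds (a t u : nat) : (0 < t)%nat -> (0 < u)%nat ->
  INR (a / t) / INR u <= INR a / INR (u * t) <= INR (S (a / t)) / INR u.
Proof.
  intros Ht Hu.
  pose proof (Nat.div_mod a t ltac:(lia)) as Hd. pose proof (Nat.mod_upper_bound a t ltac:(lia)).
  set (q := (a / t)%nat) in *. set (r := (a mod t)%nat) in *.
  assert (Ha : INR a = INR t * INR q + INR r) by (rewrite Hd at 1; rewrite plus_INR, mult_INR; ring).
  assert (INR r + 1 <= INR t) by (rewrite <- S_INR; apply le_INR; lia).
  assert (0 <= INR r) by apply pos_INR.
  assert (0 < INR t) by (apply lt_0_INR; lia). assert (0 < INR u) by (apply lt_0_INR; lia).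
  rewrite mult_INR, S_INR, Ha.
  split; apply (Rmult_le_reg_r (INR u * INR t)); try nra; field_simplify; nra.
Qed.

Lemma nth_map_fix0 (f : nat -> nat) l i :
  f 0%nat = 0%nat -> nth i (map f l) 0%nat = f (nth i l 0%nat).
Proof. intros H. rewrite <- (map_nth f l 0%nat i), H. reflexivity. Qed.

(* Refining both meshes to 1/((m+1)(m'+1)): a fine cube inside an inner coarse
   cube shares its corner with a cube of the other coarse mesh. *)
Lemma inner_approx_le_outer_approx n B A m m' :
  inner_approx n B A m <= outer_approx n B A m'.
Proof.
  unfold inner_approx, outer_approx. rewrite !countP_cnt.
  set (Pin := fun l => forall x, gcube n B m l x -> A x).
  set (Pout := fun l => exists x, gcube n B m' l x /\ A x).
  assert (Key : (cnt Pin (tuples n (2 * B * S m)) * S m' ^ n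
                 <= cnt Pout (tuples n (2 * B * S m')) * S m ^ n)%nat).
  { unfold cnt.
    rewrite Nat.mul_comm, <- (list_sum_tuples_coarsen n _ (S m') (ind Pin)) by lia.
    rewrite (Nat.mul_comm _ (S m ^ n)), <- (list_sum_tuples_coarsen n _ (S m) (ind Pout)) by lia.
    replace (2 * B * S m' * S m)%nat with (2 * B * S m * S m')%nat by lia.
    apply list_sum_map_le. intros l _. apply ind_le. intros Hin.
    set (x := fun i => - INR B + INR (nth i l 0%nat) / INR (S m * S m')).
    exists x. split; [|apply Hin]; intros i Hi; rewrite nth_map_fix0 by reflexivity; unfold x.
    - rewrite Nat.mul_comm. pose proof (div_INR_bounds (nth i l 0%nat) (S m) (S m') ltac:(lia) ltac:(lia)).
      lra.
    - pose proof (div_INR_bounds (nth i l 0%nat) (S m') (S m) ltac:(lia) ltac:(lia)). lra. }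
  apply le_INR in Key. rewrite !mult_INR, !pow_INR in Key.
  assert (0 < INR (S m) ^ n) by (apply pow_lt, lt_0_INR; lia).
  assert (0 < INR (S m') ^ n) by (apply pow_lt, lt_0_INR; lia).
  apply (Rmult_le_reg_r (INR (S m) ^ n * INR (S m') ^ n)); [nra|].
  field_simplify; lra.
Qed.

Lemma jordan_common_limit n B A :
  Un_cv (fun m => outer_approx n B A m - inner_approx n B A m) 0 ->
  exists v, Un_cv (inner_approx n B A) v /\ Un_cv (outer_approx n B A) v.
Proof.
  intros Hcv.
  set (E := fun y => exists m, y = inner_approx n B A m).
  assert (HE : bound E).
  { exists (outer_approx n B A 0). intros y [m ->]. apply inner_approx_le_outer_approx. }
  destruct (completeness E HE) as [v [Hub Hlub]]; [exists (inner_approx n B A 0); exists 0%nat; auto|].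
  assert (H1 : forall m, inner_approx n B A m <= v) by (intros m; apply Hub; exists m; auto).
  assert (H2 : forall m, v <= outer_approx n B A m).
  { intros m. apply Hlub. intros y [m' ->]. apply inner_approx_le_outer_approx. }
  exists v. split; intros eps Heps; destruct (Hcv eps Heps) as [N HN]; exists N; intros m Hm;
    specialize (HN m Hm); specialize (H1 m); specialize (H2 m); unfold R_dist in *;
    rewrite Rminus_0_r, Rabs_right in HN by lra; apply Rabs_def1; lra.
Qed.

Definition cell_corner (m : nat) (l : list nat) : nat -> R :=
  fun i => -1 + INR (nth i l 0%nat) / INR (S m).

Lemma gcube_cell_corner n m l : gcube n 1 m l (cell_corner m l).
Proof.
  intros i Hi. unfold cell_corner. change (INR 1) with 1. split; [lra|].
  assert (0 < / INR (S m)) by (apply Rinv_0_lt_compat, lt_0_INR; lia).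
  rewrite (S_INR (nth i l 0%nat)). unfold Rdiv. lra.
Qed.

Lemma l1dist_cell_corner n m l x :
  gcube n 1 m l x -> l1dist n x (cell_corner m l) <= INR n * / INR (S m).
Proof.
  intros H. apply l1dist_le. intros i Hi. specialize (H i Hi). unfold cell_corner.
  change (INR 1) with 1 in H. rewrite (S_INR (nth i l 0%nat)) in H. unfold Rdiv in *.
  rewrite Rabs_right; lra.
Qed.

Definition grid_interval (h : R) (j : nat) (t : R) : Prop := -1 + INR j * h <= t <= -1 + (INR j + 1) * h.

Lemma gcube_cons n m j l x :
  gcube (S n) 1 m (j :: l) x <->
  grid_interval (/ INR (S m)) j (x 0%nat) /\ gcube n 1 m l (fun i => x (S i)).
Proof.
  unfold grid_interval. split.
  - intros H. split; [|intros i Hi; apply (H (S i)); lia].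
    pose proof (H 0%nat ltac:(lia)) as H0. simpl nth in H0.
    rewrite (S_INR j) in H0. change (INR 1) with 1 in H0. unfold Rdiv in H0. lra.
  - intros [H0 H] [|i] Hi; [|apply H; lia].
    simpl nth. rewrite (S_INR j). change (INR 1) with 1. unfold Rdiv. lra.
Qed.

Lemma cnt_seq_between a b K s :
  INR (cnt (fun j => a <= INR j <= b) (seq s K)) <= Rmax 0 (b - Rmax a (INR s) + 1).
Proof.
  revert s; induction K as [|K IH]; intros s; [apply Rmax_l|].
  unfold cnt in *; simpl. rewrite plus_INR. specialize (IH (S s)). rewrite S_INR in IH.
  unfold ind at 1. destruct excluded_middle_informative; simpl INR;
    revert IH; unfold Rmax; repeat destruct Rle_dec; intros; lra.
Qed.

Lemma cnt_grid_between a b h K : 0 < h -> a <= b + h ->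
  INR (cnt (fun j => a <= INR j * h <= b) (seq 0 K)) <= (b - a) / h + 1.
Proof.
  intros Hh Hab.
  assert (Hle : le (cnt (fun j => a <= INR j * h <= b) (seq 0 K))
                   (cnt (fun j => a / h <= INR j <= b / h) (seq 0 K))).
  { apply cnt_le. intros j _ [H1 H2].
    split; apply (Rmult_le_reg_r h); auto; unfold Rdiv; rewrite Rmult_assoc, Rinv_l, Rmult_1_r; lra. }
  apply le_INR in Hle. pose proof (cnt_seq_between (a / h) (b / h) K 0) as H. simpl INR in H.
  assert (Hq : (b - a) / h + 1 = b / h - a / h + 1) by (field; lra).
  assert (-1 <= (b - a) / h).
  { replace (-1) with ((- h) / h) by (field; lra).
    apply Rmult_le_compat_r; [left; apply Rinv_0_lt_compat|]; lra. }
  revert H. unfold Rmax. repeat destruct Rle_dec; intros; lra.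
Qed.

Lemma cnt_cells_near a w h K : 0 < h -> 0 <= w ->
  INR (cnt (fun j => a - w - h <= -1 + INR j * h <= a + w) (seq 0 K)) <= 2 * w / h + 2.
Proof.
  intros Hh Hw.
  assert (Hle : le (cnt (fun j => a - w - h <= -1 + INR j * h <= a + w) (seq 0 K))
                   (cnt (fun j => 1 + a - w - h <= INR j * h <= 1 + a + w) (seq 0 K)))
    by (apply cnt_le; intros; lra).
  apply le_INR in Hle. eapply Rle_trans; [exact Hle|].
  eapply Rle_trans; [apply cnt_grid_between; lra|]. right. field. lra.
Qed.

(* A cell meeting [-P,P] ∩ [c0-Q,c0+Q] but not inside the same intersection
   shrunk by w straddles one of the four endpoints. *)
Lemma cnt_cells_meet_le_inside h K P Q c0 w (N : nat) :
  0 < h -> 0 <= w -> 8 * (w / h) + 8 <= INR N ->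
  le (cnt (fun j => exists t, grid_interval h j t /\ Rabs t <= P /\ Rabs (t - c0) <= Q) (seq 0 K))
     (cnt (fun j => forall t, grid_interval h j t -> Rabs t <= P - w /\ Rabs (t - c0) <= Q - w)
          (seq 0 K) + N).
Proof.
  intros Hh Hw HN. unfold grid_interval.
  set (near a := fun j => a - w - h <= -1 + INR j * h <= a + w).
  eapply Nat.le_trans; [apply cnt_split|]. apply Nat.add_le_mono_l.
  assert (Hnear : le (cnt (fun j => near (- P) j \/ near P j) (seq 0 K)
                       + cnt (fun j => near (c0 - Q) j \/ near (c0 + Q) j) (seq 0 K))
                     N).
  { apply INR_le. rewrite plus_INR.
    pose proof (cnt_or (fun j => near (- P) j \/ near P j) (near (- P)) (near P) (seq 0 K)
                  ltac:(auto)) as H1.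
    pose proof (cnt_or (fun j => near (c0 - Q) j \/ near (c0 + Q) j) (near (c0 - Q))
                  (near (c0 + Q)) (seq 0 K) ltac:(auto)) as H2.
    apply le_INR in H1, H2. rewrite plus_INR in H1, H2.
    pose proof (cnt_cells_near (- P) w h K Hh Hw). pose proof (cnt_cells_near P w h K Hh Hw).
    pose proof (cnt_cells_near (c0 - Q) w h K Hh Hw).
    pose proof (cnt_cells_near (c0 + Q) w h K Hh Hw).
    unfold near in *. unfold Rdiv in *. lra. }
  eapply Nat.le_trans; [|exact Hnear]. apply cnt_or.
  intros j _ [[t [Ht [H1 H2]]] Hn]. apply Rabs_le_iff in H1, H2. unfold near.
  destruct (Rle_dec (- P + w) (-1 + INR j * h)); [|left; left; lra].
  destruct (Rle_dec (-1 + (INR j + 1) * h) (P - w)); [|left; right; lra].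
  destruct (Rle_dec (c0 - Q + w) (-1 + INR j * h)); [|right; left; lra].
  destruct (Rle_dec (-1 + (INR j + 1) * h) (c0 + Q - w)); [|right; right; lra].
  exfalso. apply Hn. intros t' Ht'. rewrite !Rabs_le_iff. lra.
Qed.

Lemma cnt_cells_inside_le a b h K : 0 < h -> a <= b ->
  INR (cnt (fun j => forall t, grid_interval h j t -> a <= t <= b) (seq 0 K)) <= (b - a) / h.
Proof.
  intros Hh Hab.
  assert (Hle : le (cnt (fun j => forall t, grid_interval h j t -> a <= t <= b) (seq 0 K))
                   (cnt (fun j => 1 + a <= INR j * h <= 1 + b - h) (seq 0 K))).
  { apply cnt_le. intros j _ Hj. unfold grid_interval in Hj.
    pose proof (Hj (-1 + INR j * h) ltac:(lra)). pose proof (Hj (-1 + (INR j + 1) * h) ltac:(lra)).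
    lra. }
  apply le_INR in Hle. eapply Rle_trans; [exact Hle|].
  eapply Rle_trans; [apply cnt_grid_between; lra|]. right. field. lra.
Qed.

Lemma cnt_cells_meet_ge M h K : 0 < h -> INR K * h = 2 -> 0 <= M <= 1 ->
  2 * M / h <= INR (cnt (fun j => exists t, grid_interval h j t /\ - M <= t <= M) (seq 0 K)).
Proof.
  intros Hh HK HM. unfold grid_interval.
  set (Meet := fun j => exists t, -1 + INR j * h <= t <= -1 + (INR j + 1) * h /\ - M <= t <= M).
  assert (Hmiss : le (cnt (fun j => ~ Meet j) (seq 0 K))
     (cnt (fun j => 1 + M <= INR j * h <= (INR K - 1) * h) (seq 0 K)
      + cnt (fun j => 0 <= INR j * h <= 1 - M - h) (seq 0 K))).
  { apply cnt_or. intros j Hj HnM. apply in_seq in Hj.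
    assert (INR j + 1 <= INR K) by (rewrite <- S_INR; apply le_INR; lia).
    assert (0 <= INR j * h) by (apply Rmult_le_pos; [apply pos_INR | lra]).
    destruct (Rle_dec (-1 + INR j * h) M) as [Hl|Hl].
    - right. split; auto. destruct (Rle_dec (- M) (-1 + (INR j + 1) * h)); [|lra].
      exfalso. apply HnM. exists (Rmax (-1 + INR j * h) (- M)).
      unfold Rmax; destruct Rle_dec; lra.
    - left. split; [lra|]. nra. }
  apply le_INR in Hmiss. rewrite plus_INR in Hmiss.
  pose proof (cnt_add_cnt_not Meet (seq 0 K)) as Hc.
  apply (f_equal INR) in Hc. rewrite plus_INR, length_seq in Hc.
  pose proof (cnt_grid_between (1 + M) ((INR K - 1) * h) h K Hh ltac:(lra)).
  pose proof (cnt_grid_between 0 (1 - M - h) h K Hh ltac:(lra)).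
  assert (((INR K - 1) * h - (1 + M)) / h + 1 = INR K - (1 + M) / h) by (field; lra).
  assert ((1 - M - h - 0) / h + 1 = (1 - M) / h) by (field; lra).
  assert (2 * M / h = (1 + M) / h - (1 - M) / h) by (field; lra).
  fold Meet. lra.
Qed.

(* Moving the centre c0 of the second interval to 0 cannot decrease the length
   of the intersection [-p,p] ∩ [c0-q,c0+q]: both sides are compared to
   2 min(p,q). *)
Lemma cnt_cells_inside_le_meet_centred m p q c0 : p <= 1 ->
  le (cnt (fun j => forall t, grid_interval (/ INR (S m)) j t -> Rabs t <= p /\ Rabs (t - c0) <= q)
          (seq 0 (2 * 1 * S m)))
     (cnt (fun j => exists t, grid_interval (/ INR (S m)) j t /\ Rabs t <= p /\ Rabs t <= q)
          (seq 0 (2 * 1 * S m))).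
Proof.
  intros Hp.
  set (h := / INR (S m)). set (K := (2 * 1 * S m)%nat). set (M := Rmin p q).
  assert (Hh : 0 < h) by (apply Rinv_0_lt_compat, lt_0_INR; lia).
  assert (HK : INR K * h = 2).
  { unfold K, h. rewrite !mult_INR. change (INR 2) with 2. change (INR 1) with 1.
    field. apply not_0_INR. lia. }
  destruct (Rlt_le_dec M 0) as [HM|HM].
  { apply cnt_le. intros j _ Hj. exfalso.
    destruct (Hj (-1 + INR j * h)) as [H1 H2]; [unfold grid_interval; lra|].
    pose proof (Rabs_pos (-1 + INR j * h)). pose proof (Rabs_pos (-1 + INR j * h - c0)).
    unfold M, Rmin in HM; destruct Rle_dec in HM; lra. }
  apply INR_le. eapply Rle_trans with (2 * M / h).
  - assert (HMpq : M = p \/ M = q) by (unfold M, Rmin; destruct Rle_dec; auto).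
    destruct HMpq as [E|E].
    + replace (2 * M / h) with ((M - - M) / h) by (field; lra).
      eapply Rle_trans; [|apply (cnt_cells_inside_le (- M) M h K); lra].
      apply le_INR, cnt_le. intros j _ Hj t Ht. apply Rabs_le_iff. rewrite E. apply Hj, Ht.
    + replace (2 * M / h) with ((c0 + M - (c0 - M)) / h) by (field; lra).
      eapply Rle_trans; [|apply (cnt_cells_inside_le (c0 - M) (c0 + M) h K); lra].
      apply le_INR, cnt_le. intros j _ Hj t Ht. destruct (Hj t Ht) as [_ H].
      apply Rabs_le_iff in H. lra.
  - eapply Rle_trans; [apply (cnt_cells_meet_ge M h K); auto; split; auto|].
    + apply Rle_trans with p; [apply Rmin_l | exact Hp].
    + apply le_INR, cnt_le. intros j _ [t [Ht Hm]]. exists t. split; auto.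
      pose proof (Rmin_l p q). pose proof (Rmin_r p q). rewrite !Rabs_le_iff. unfold M in Hm. lra.
Qed.

Definition lens (n : nat) (c : nat -> R) (r : R) : (nat -> R) -> Prop :=
  fun x => Cball n (fun _ => 0) 1 x /\ Cball n c r x.

Lemma lens_cons n c r x :
  lens (S n) c r x <->
  Rabs (x 0%nat) + l1dist n (fun i => x (S i)) (fun _ => 0) <= 1 /\
  Rabs (x 0%nat - c 0%nat) + l1dist n (fun i => x (S i)) (fun i => c (S i)) <= r.
Proof. unfold lens, Cball. rewrite !l1dist_cons, Rminus_0_r. tauto. Qed.

Lemma lens_bounded n c r x : lens n c r x -> forall i, (i < n)%nat -> - INR 1 <= x i <= INR 1.
Proof.
  intros [H _] i Hi. pose proof (Rabs_coord_le_l1dist n x (fun _ => 0) i Hi).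
  unfold Cball in H. rewrite Rminus_0_r in *. change (INR 1) with 1. apply Rabs_le_iff. lra.
Qed.

(* Cubes of one column differ only in the first coordinate; the others stay
   within l1-distance d = n/(m+1) of the corner of the column. *)
Lemma lens_column_meet_le_inside n m l c r :
  le (cnt (fun j => exists x, gcube (S n) 1 m (j :: l) x /\ lens (S n) c r x)
          (seq 0 (2 * 1 * S m)))
     (cnt (fun j => forall x, gcube (S n) 1 m (j :: l) x -> lens (S n) c r x)
          (seq 0 (2 * 1 * S m)) + (16 * n + 8)).
Proof.
  set (h := / INR (S m)). set (y := cell_corner m l). set (d := INR n * h).
  set (D0 := l1dist n y (fun _ => 0)). set (Dc := l1dist n y (fun i => c (S i))).
  assert (Hh : 0 < h) by (apply Rinv_0_lt_compat, lt_0_INR; lia).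
  assert (Hd : 0 <= d) by (apply Rmult_le_pos; [apply pos_INR | lra]).
  assert (Hclose : forall j x, gcube (S n) 1 m (j :: l) x ->
            grid_interval h j (x 0%nat) /\ l1dist n (fun i => x (S i)) y <= d /\
            l1dist n y (fun i => x (S i)) <= d).
  { intros j x Hx. apply gcube_cons in Hx as [Hx0 Hx].
    pose proof (l1dist_cell_corner n m l _ Hx). rewrite (l1dist_sym n y). auto. }
  eapply Nat.le_trans.
  { apply (cnt_le _ (fun j => exists t, grid_interval h j t /\
             Rabs t <= 1 - D0 + d /\ Rabs (t - c 0%nat) <= r - Dc + d)).
    intros j _ [x [Hx Hl]]. destruct (Hclose j x Hx) as [Hx0 [_ Hs]].
    apply lens_cons in Hl. exists (x 0%nat). split; [exact Hx0|].
    pose proof (l1dist_triangle n y (fun i => x (S i)) (fun _ => 0)).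
    pose proof (l1dist_triangle n y (fun i => x (S i)) (fun i => c (S i))).
    unfold D0, Dc. lra. }
  eapply Nat.le_trans.
  { apply (cnt_cells_meet_le_inside h _ _ _ (c 0%nat) (2 * d) (16 * n + 8)); [exact Hh | lra|].
    rewrite plus_INR, mult_INR. replace (2 * d / h) with (2 * INR n) by (unfold d; field; lra).
    replace (INR 16) with 16 by (simpl; ring); replace (INR 8) with 8 by (simpl; ring). lra. }
  apply Nat.add_le_mono_r, cnt_le. intros j _ Hj x Hx.
  destruct (Hclose j x Hx) as [Hx0 [Hs _]]. destruct (Hj _ Hx0) as [H1 H2].
  pose proof (l1dist_triangle n (fun i => x (S i)) y (fun _ => 0)).
  pose proof (l1dist_triangle n (fun i => x (S i)) y (fun i => c (S i))).
  apply lens_cons. unfold D0, Dc in *. lra.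
Qed.

Lemma Un_cv_0_squeeze_inv (u : nat -> R) C :
  (forall m, 0 <= u m <= C / INR (S m)) -> Un_cv u 0.
Proof.
  intros Hu eps Heps.
  assert (HC : 0 <= C).
  { destruct (Hu 0%nat) as [H0 H1]. simpl in H1. lra. }
  destruct (archimed_cor1 (eps / (C + 1))) as [N [HN HN0]]; [apply Rdiv_lt_0_compat; lra|].
  exists N. intros m Hm. unfold R_dist. rewrite Rminus_0_r.
  destruct (Hu m) as [H0 H1]. rewrite Rabs_right by lra.
  assert (Hm' : 0 < INR N <= INR (S m)) by (split; [apply lt_0_INR | apply le_INR]; lia).
  apply Rle_lt_trans with ((C + 1) / INR N).
  - assert (0 < / INR (S m)) by (apply Rinv_0_lt_compat; lra).
    apply Rle_trans with ((C + 1) / INR (S m)); [unfold Rdiv in *; nra|].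
    apply Rmult_le_compat_l; [lra|]. apply Rinv_le_contravar; lra.
  - apply (Rmult_lt_reg_r (/ (C + 1))); [apply Rinv_0_lt_compat; lra|].
    replace ((C + 1) / INR N * / (C + 1)) with (/ INR N) by (field; lra). exact HN.
Qed.

Lemma lens_outer_sub_inner_le n c r m :
  outer_approx (S n) 1 (lens (S n) c r) m - inner_approx (S n) 1 (lens (S n) c r) m
  <= INR (16 * n + 8) * 2 ^ n / INR (S m).
Proof.
  unfold outer_approx, inner_approx. rewrite !countP_cnt.
  set (K := (2 * 1 * S m)%nat).
  assert (Hcol : le (cnt (fun l => exists x, gcube (S n) 1 m l x /\ lens (S n) c r x)
                         (tuples (S n) K))
                    (cnt (fun l => forall x, gcube (S n) 1 m l x -> lens (S n) c r x)
                         (tuples (S n) K) + (16 * n + 8) * K ^ n)).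
  { rewrite !cnt_tuples_S, <- (tuples_length n K).
    apply list_sum_map_le_add. intros l _. apply lens_column_meet_le_inside. }
  apply le_INR in Hcol. rewrite plus_INR, mult_INR, pow_INR in Hcol.
  assert (HK : INR K = 2 * INR (S m)) by (unfold K; rewrite !mult_INR; simpl; ring).
  rewrite HK, Rpow_mult_distr in Hcol.
  assert (Hs : 0 < INR (S m)) by (apply lt_0_INR; lia).
  assert (Hsn : 0 < INR (S m) ^ n) by (apply pow_lt; auto).
  change (INR (S m) ^ S n) with (INR (S m) * INR (S m) ^ n).
  apply (Rmult_le_reg_r (INR (S m) * INR (S m) ^ n)); [nra|].
  field_simplify; try lra; nra.
Qed.

Lemma lens_jordan n c r :
  exists v, Un_cv (inner_approx (S n) 1 (lens (S n) c r)) v /\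
            Un_cv (outer_approx (S n) 1 (lens (S n) c r)) v.
Proof.
  apply jordan_common_limit, (Un_cv_0_squeeze_inv _ (INR (16 * n + 8) * 2 ^ n)).
  intros m. split; [|apply lens_outer_sub_inner_le].
  pose proof (inner_approx_le_outer_approx (S n) 1 (lens (S n) c r) m m). lra.
Qed.

(* Along the line through the corner of the column, the sections are
   [-p,p] ∩ [c0-q,c0+q] for c and [-p,p] ∩ [-q,q] for c'. *)
Lemma lens_column_inside_le_meet n m l c c' r :
  c' 0%nat = 0 -> (forall i, c' (S i) = c (S i)) ->
  le (cnt (fun j => forall x, gcube (S n) 1 m (j :: l) x -> lens (S n) c r x)
          (seq 0 (2 * 1 * S m)))
     (cnt (fun j => exists x, gcube (S n) 1 m (j :: l) x /\ lens (S n) c' r x)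
          (seq 0 (2 * 1 * S m))).
Proof.
  intros H0 HS.
  set (y := cell_corner m l).
  set (D0 := l1dist n y (fun _ => 0)). set (Dc := l1dist n y (fun i => c (S i))).
  set (pt t := fun i => match i with O => t | S i' => y i' end).
  assert (Hpt : forall j t, grid_interval (/ INR (S m)) j t -> gcube (S n) 1 m (j :: l) (pt t))
    by (intros j t Ht; apply gcube_cons; split; [exact Ht | apply gcube_cell_corner]).
  assert (Hlens : forall d t, lens (S n) d r (pt t) <->
            Rabs t + D0 <= 1 /\ Rabs (t - d 0%nat) + l1dist n y (fun i => d (S i)) <= r)
    by (intros d t; apply lens_cons).
  assert (Ec : (fun i => c' (S i)) = (fun i => c (S i))) by (apply functional_extensionality; auto).
  assert (HD0 : 0 <= D0) by apply l1dist_ge0.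
  eapply Nat.le_trans.
  { apply (cnt_le _ (fun j => forall t, grid_interval (/ INR (S m)) j t ->
                       Rabs t <= 1 - D0 /\ Rabs (t - c 0%nat) <= r - Dc)).
    intros j _ Hj t Ht. apply Hpt, Hj, Hlens in Ht. fold Dc in Ht. destruct Ht. split; lra. }
  eapply Nat.le_trans; [apply (cnt_cells_inside_le_meet_centred m (1 - D0) (r - Dc) (c 0%nat)); lra|].
  apply cnt_le. intros j _ [t [Ht [Hb1 Hb2]]]. exists (pt t). split; [apply Hpt; auto|].
  apply Hlens. rewrite Ec, H0, Rminus_0_r. fold Dc. split; lra.
Qed.

Lemma lens_inner_le_outer_centred n c c' r m :
  c' 0%nat = 0 -> (forall i, c' (S i) = c (S i)) ->
  inner_approx (S n) 1 (lens (S n) c r) m <= outer_approx (S n) 1 (lens (S n) c' r) m.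
Proof.
  intros H0 HS. unfold inner_approx, outer_approx.
  apply Rmult_le_compat_r; [left; apply Rinv_0_lt_compat, pow_lt, lt_0_INR; lia|].
  apply le_INR. rewrite !countP_cnt, !cnt_tuples_S. apply list_sum_map_le.
  intros l _. apply lens_column_inside_le_meet; auto.
Qed.

Section CoordinateInvolution.

Variables (n : nat) (sigma : nat -> nat).
Hypothesis sigma_involutive : forall i, sigma (sigma i) = i.
Hypothesis sigma_lt : forall i, (i < n)%nat -> (sigma i < n)%nat.

Lemma sigma_injective : Injective sigma.
Proof. intros a b H. rewrite <- (sigma_involutive a), H. apply sigma_involutive. Qed.

Lemma comp_sigma_sigma (x : nat -> R) : (fun i => x (sigma (sigma i))) = x.
Proof. apply functional_extensionality. intros i. rewrite sigma_involutive. reflexivity. Qed.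

Lemma l1dist_permute x y : l1dist n x y = l1dist n (fun i => x (sigma i)) (fun i => y (sigma i)).
Proof.
  rewrite !l1dist_fold_right, <- (map_map sigma (fun i => Rabs (x i - y i))).
  assert (Hp : Permutation (map sigma (seq 0 n)) (seq 0 n))
    by (apply nat_bijection_Permutation; [exact sigma_lt | exact sigma_injective]).
  apply (Permutation_map (fun i => Rabs (x i - y i))) in Hp.
  induction Hp; simpl; lra.
Qed.

Lemma lens_permute c r x :
  lens n (fun i => c (sigma i)) r x <-> lens n c r (fun i => x (sigma i)).
Proof.
  unfold lens, Cball.
  rewrite (l1dist_permute (fun i => x (sigma i)) c), (l1dist_permute (fun i => x (sigma i)) (fun _ => 0)).
  rewrite comp_sigma_sigma. tauto.
Qed.

Definition permute_tuple (l : list nat) : list nat := map (fun i => nth (sigma i) l 0%nat) (seq 0 n).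

Lemma nth_permute_tuple l i : (i < n)%nat -> nth i (permute_tuple l) 0%nat = nth (sigma i) l 0%nat.
Proof.
  intros Hi. unfold permute_tuple.
  rewrite (nth_indep _ 0%nat (nth (sigma 0%nat) l 0%nat)) by (rewrite length_map, length_seq; auto).
  rewrite (map_nth (fun i => nth (sigma i) l 0%nat)), seq_nth by auto. reflexivity.
Qed.

Lemma permute_tuple_involutive l : length l = n -> permute_tuple (permute_tuple l) = l.
Proof.
  intros Hl. apply (nth_ext _ _ 0%nat 0%nat); [unfold permute_tuple; rewrite length_map, length_seq; auto|].
  intros i Hi. unfold permute_tuple at 1 in Hi. rewrite length_map, length_seq in Hi.
  rewrite !nth_permute_tuple, sigma_involutive; auto.
Qed.

Lemma Permutation_permute_tuples K :
  Permutation (map permute_tuple (tuples n K)) (tuples n K).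
Proof.
  apply Permutation_map_same_l.
  - apply Injective_map_NoDup_in; [|apply NoDup_tuples].
    intros a b Ha Hb E. apply In_tuples in Ha, Hb.
    rewrite <- (permute_tuple_involutive a), E, permute_tuple_involutive; tauto.
  - intros a Ha. apply in_map_iff in Ha. destruct Ha as [l [<- Hl]].
    apply In_tuples in Hl as [_ Hl]. apply In_tuples.
    split; [unfold permute_tuple; rewrite length_map, length_seq; auto|].
    intros i Hi. rewrite nth_permute_tuple by auto. auto.
Qed.

Lemma gcube_permute_tuple B m l x :
  gcube n B m (permute_tuple l) x <-> gcube n B m l (fun i => x (sigma i)).
Proof.
  split; intros H i Hi.
  - specialize (H (sigma i) (sigma_lt i Hi)). rewrite nth_permute_tuple, sigma_involutive in H by auto.
    exact H.
  - rewrite nth_permute_tuple by auto. specialize (H (sigma i) (sigma_lt i Hi)). cbv beta in H.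
    rewrite sigma_involutive in H. exact H.
Qed.

Lemma cnt_tuples_permute (P : list nat -> Prop) K :
  cnt P (tuples n K) = cnt (fun l => P (permute_tuple l)) (tuples n K).
Proof.
  unfold cnt. rewrite <- (Permutation_permute_tuples K) at 1. rewrite map_map. reflexivity.
Qed.

Lemma inner_approx_permute B (A A' : (nat -> R) -> Prop) m :
  (forall x, A' x <-> A (fun i => x (sigma i))) -> inner_approx n B A m = inner_approx n B A' m.
Proof.
  intros HA. unfold inner_approx. rewrite !countP_cnt, cnt_tuples_permute.
  do 2 f_equal. unfold cnt. f_equal. apply map_ext. intros l. apply ind_eq. split.
  - intros H z Hz. apply HA, H, gcube_permute_tuple. cbv beta. rewrite comp_sigma_sigma. exact Hz.
  - intros H x Hx. apply gcube_permute_tuple, H, HA in Hx. rewrite comp_sigma_sigma in Hx. exact Hx.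
Qed.

Lemma outer_approx_permute B (A A' : (nat -> R) -> Prop) m :
  (forall x, A' x <-> A (fun i => x (sigma i))) -> outer_approx n B A m = outer_approx n B A' m.
Proof.
  intros HA. unfold outer_approx. rewrite !countP_cnt, cnt_tuples_permute.
  do 2 f_equal. unfold cnt. f_equal. apply map_ext. intros l. apply ind_eq. split.
  - intros [x [Hx Ax]]. exists (fun i => x (sigma i)).
    split; [apply gcube_permute_tuple, Hx | apply HA; cbv beta; rewrite comp_sigma_sigma; exact Ax].
  - intros [z [Hz Az]]. exists (fun i => z (sigma i)). split; [|apply HA, Az].
    apply gcube_permute_tuple. cbv beta. rewrite comp_sigma_sigma. exact Hz.
Qed.

End CoordinateInvolution.

Definition swap_with0 (j i : nat) : nat := if Nat.eqb i 0 then j else if Nat.eqb i j then 0%nat else i.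

Lemma swap_with0_involutive j i : swap_with0 j (swap_with0 j i) = i.
Proof.
  unfold swap_with0. destruct (Nat.eqb_spec i 0); destruct (Nat.eqb_spec i j);
    repeat match goal with |- context [Nat.eqb ?a ?b] => destruct (Nat.eqb_spec a b) end; lia.
Qed.

Lemma swap_with0_lt n j i : (j < n)%nat -> (i < n)%nat -> (swap_with0 j i < n)%nat.
Proof. unfold swap_with0. destruct (Nat.eqb_spec i 0); destruct (Nat.eqb_spec i j); lia. Qed.

Lemma zeroed_coord_swap_with0 (c : nat -> R) j :
  let c' := fun i => if Nat.eqb i j then 0 else c i in
  c' (swap_with0 j 0) = 0 /\ forall i, c' (swap_with0 j (S i)) = c (swap_with0 j (S i)).
Proof.
  intros c'. unfold c'. split; [unfold swap_with0; simpl; rewrite Nat.eqb_refl; reflexivity|].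
  intros i. destruct (Nat.eqb_spec (swap_with0 j (S i)) j) as [E|]; [|reflexivity].
  apply (f_equal (swap_with0 j)) in E. rewrite swap_with0_involutive in E.
  unfold swap_with0 in E. rewrite Nat.eqb_refl in E. destruct (Nat.eqb_spec j 0); lia.
Qed.

Theorem mainTheorem8 (n k : nat) (r : R) (c : nat -> R) :
  0 < r ->
  (2 <= k <= n)%nat ->
  (forall i, (i < n)%nat -> 0 <= c i) ->
  (forall i, (k <= i)%nat -> c i = 0) ->
  exists v v' : R,
    has_volume n (fun x => Cball n (fun _ => 0) 1 x /\ Cball n c r x) v /\
    has_volume n (fun x => Cball n (fun _ => 0) 1 x /\
                   Cball n (fun i => if Nat.eqb i (k - 1) then 0 else c i) r x) v' /\
    v <= v'.
Proof.
  intros _ Hk _ _.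
  destruct n as [|n]; [lia|].
  set (c' := fun i => if Nat.eqb i (k - 1) then 0 else c i).
  set (sigma := swap_with0 (k - 1)).
  assert (Hsigma : forall i, (i < S n)%nat -> (sigma i < S n)%nat) by (intros; apply swap_with0_lt; lia).
  destruct (lens_jordan n c r) as [v [Hin Hout]].
  destruct (lens_jordan n c' r) as [v' [Hin' Hout']].
  exists v, v'. split; [|split].
  - exists 1%nat. exact (conj (lens_bounded _ c r) (conj Hin Hout)).
  - exists 1%nat. exact (conj (lens_bounded _ c' r) (conj Hin' Hout')).
  - refine (Rle_cv_lim _ Hin Hout'). intros m.
    pose proof (lens_permute _ sigma (swap_with0_involutive _) Hsigma) as Hlens.
    rewrite (inner_approx_permute _ sigma (swap_with0_involutive _) Hsigma 1 (lens (S n) c r)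
               (lens (S n) (fun i => c (sigma i)) r) m (Hlens c r)).
    rewrite (outer_approx_permute _ sigma (swap_with0_involutive _) Hsigma 1 (lens (S n) c' r)
               (lens (S n) (fun i => c' (sigma i)) r) m (Hlens c' r)).
    apply lens_inner_le_outer_centred; apply (zeroed_coord_swap_with0 c (k - 1)).
Qed.
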